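(* Let $G_1=(T_1,A_1)$ and $G_2=(T_2,A_2)$ be games such that $T_1,T_2,A_1,A_2$ are at most countable, and suppose $G_2$ is injective in $\mathbf{Games}_{emb}$ with respect to embeddings between finite games. If $G=(T,A)\le G_1$ is a finite game and $f\colon G\to G_2$ is a game embedding, then there is a game embedding $\tilde f\colon G_1\to G_2$ with $\tilde f|_T=f$.
   Context: A game tree is $T\subseteq M^{<\omega}$ (some set $M$) closed under initial segments such that every $t\in T$ has an extension $t^\frown x\in T$; $|t|$ is the length and $t\restriction k$ the initial segment of length $k$. $\mathrm{Run}(T)=\{R\in M^\omega:R\restriction n\in T\ \forall n\}$. A game is $(T,A)$ with $A\subseteq\mathrm{Run}(T)$; it is finite if $\mathrm{Run}(T)$ is finite. For games, $(T,A)\le(T',A')$ means $T\subseteq T'$ and $A=A'\cap\mathrm{Run}(T)$. A chronological map $f\colon T_1\to T_2$ satisfies $|f(t)|=|t|$, $f(t\restriction k)=f(t)\restriction k$, and induces $\bar f$ on runs by $\bar f(R)\restriction n=f(R\restriction n)$. A game embedding $(T_1,A_1)\to(T_2,A_2)$ is an injective chronological $f$ with $\bar f(R)\in A_2\iff R\in A_1$ for all $R\in\mathrm{Run}(T_1)$. $\mathbf{Games}_{emb}$ is the category of games with game embeddings. A game $X$ is injective in $\mathbf{Games}_{emb}$ with respect to embeddings between finite games if for all finite games $C,D$, every game embedding $g\colon C\to D$ and every game embedding $f\colon C\to X$ there is a game embedding $h\colon D\to X$ with $h\circ g=f$. *)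

From Stdlib Require List.
From mathcomp Require Import all_boot.
Set Implicit Arguments. Unset Strict Implicit. Unset Printing Implicit Defensive.

Section Games.

Definition restr (M : Type) (R : nat -> M) (n : nat) : seq M := mkseq R n.

Definition game_tree (M : Type) (T : seq M -> Prop) : Prop :=
  (forall (t : seq M) (k : nat), T t -> T (take k t)) /\
  (forall t : seq M, T t -> exists x : M, T (rcons t x)).

Definition Run (M : Type) (T : seq M -> Prop) (R : nat -> M) : Prop :=
  forall n : nat, T (restr R n).

Record game (M : Type) := Game { gtree : seq M -> Prop; gwin : (nat -> M) -> Prop }.

Definition is_game (M : Type) (G : game M) : Prop :=
  game_tree (gtree G) /\ (forall R, gwin G R -> Run (gtree G) R).

Definition finite_game (M : Type) (G : game M) : Prop :=
  exists l : list (nat -> M), forall R, Run (gtree G) R -> List.In R l.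

Definition game_le (M : Type) (G G' : game M) : Prop :=
  (forall t, gtree G t -> gtree G' t) /\
  (forall R, gwin G R <-> (gwin G' R /\ Run (gtree G) R)).

(* chronological map T1 -> T2 (only its values on T1 matter) *)
Definition chronological (M1 M2 : Type) (T1 : seq M1 -> Prop) (T2 : seq M2 -> Prop)
  (f : seq M1 -> seq M2) : Prop :=
  forall t, T1 t ->
    [/\ T2 (f t), size (f t) = size t & forall k : nat, f (take k t) = take k (f t)].

Definition induced (M1 M2 : Type) (f : seq M1 -> seq M2) (R : nat -> M1) (R' : nat -> M2)
  : Prop := forall n : nat, restr R' n = f (restr R n).

Definition game_embedding (M1 M2 : Type) (G1 : game M1) (G2 : game M2)
  (f : seq M1 -> seq M2) : Prop :=
  [/\ chronological (gtree G1) (gtree G2) f,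
      (forall s t, gtree G1 s -> gtree G1 t -> f s = f t -> s = t) &
      (forall R R', Run (gtree G1) R -> induced f R R' -> (gwin G2 R' <-> gwin G1 R))].

Definition countable_set (X : Type) (S : X -> Prop) : Prop :=
  exists g : X -> nat, forall x y, S x -> S y -> g x = g y -> x = y.

Definition injective_finite (M : Type) (X : game M) : Prop :=
  forall (MC MD : Type) (C : game MC) (D : game MD)
         (g : seq MC -> seq MD) (f : seq MC -> seq M),
    is_game C -> is_game D -> finite_game C -> finite_game D ->
    game_embedding C D g -> game_embedding C X f ->
    exists h : seq MD -> seq M,
      game_embedding D X h /\ (forall t, gtree C t -> h (g t) = f t).

End Games.

From Stdlib Require Import ClassicalEpsilon FunctionalExtensionality Classical.
From Stdlib Require List.
From mathcomp Require Import all_boot zify.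
Set Implicit Arguments. Unset Strict Implicit. Unset Printing Implicit Defensive.

(* Enumerate the winning runs of G2, and the winning runs of G1 together with one
   sequence through each node of G1.  Grow G into finite games H_0 = G, H_1, ...,
   adding at stage n the n-th enumerated sequence as a new branch, so that the H_n
   exhaust G1, and extend the embedding stage by stage.  To extend it from H_n to
   H_(n+1), embed H_n into the finite game made of H_n and K tagged copies of the new
   branch and let the injectivity of G2 extend the embedding to that game: the
   copies have pairwise distinct images at the level where the branch leaves H_n,
   so for K large one of them avoids the first n winning runs of G2, and the new
   branch is sent along it.  The union of these embeddings is the extension.  A run
   of G1 lying in no H_n is not winning, being enumerated otherwise; nor is its
   image, which leaves every winning run of G2 at a late enough stage. *)

Lemma ex_least (P : nat -> Prop) :
  (exists n, P n) -> exists n, P n /\ forall k, k < n -> ~ P k.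
Proof.
move=> [n Pn]; apply: NNPP => none.
suff below : forall m k, k < m -> ~ P k by exact: (below n.+1 n).
elim=> [|m IH] k //; rewrite ltnS leq_eqVlt => /predU1P [-> Pm|/IH //].
by apply: none; exists m.
Qed.

Lemma pigeonhole_avoid (X : Type) (F : nat -> X) (A : seq X) (K : nat) :
  size A < K -> (forall i j, i < K -> j < K -> F i = F j -> i = j) ->
  exists i, i < K /\ ~ List.In (F i) A.
Proof.
move=> szA Finj; apply: NNPP => allin.
have incl : List.incl (List.map F (iota 0 K)) A.
  move=> y /List.in_map_iff [i [<- /List.in_seq lti]].
  by apply: NNPP => Ni; apply: allin; exists i; split => //; lia.
have nodup : List.NoDup (List.map F (iota 0 K)).
  apply: List.NoDup_map_NoDup_ForallPairs (List.seq_NoDup K 0).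
  by move=> i j /List.in_seq ? /List.in_seq ?; apply: Finj; lia.
have := List.NoDup_incl_length nodup incl.
rewrite List.length_map List.length_seq => /leP.
by change (K <= size A -> False); rewrite leqNgt szA.
Qed.

Lemma In_pmap (aT rT : Type) (f : aT -> option rT) (s : seq aT) x y :
  List.In x s -> f x = Some y -> List.In y (pmap f s).
Proof.
elim: s => //= a s IH [-> fx|sx fx]; first by rewrite fx; left.
by case: (f a) => [z|]; [right|]; apply: IH.
Qed.

Section Restr.
Variable M : Type.
Implicit Types (R S : nat -> M) (t : seq M).

Lemma size_restr R m : size (restr R m) = m.
Proof. exact: size_mkseq. Qed.

Lemma take_restr R k m : take k (restr R m) = restr R (minn k m).
Proof. by rewrite /restr /mkseq -map_take take_iota. Qed.

Lemma restrS R m : restr R m.+1 = rcons (restr R m) (R m).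
Proof. exact: mkseqS. Qed.

Lemma nth_restr x0 R m p : p < m -> nth x0 (restr R m) p = R p.
Proof. exact: nth_mkseq. Qed.

Lemma map_restr (N : Type) (f : M -> N) R m :
  map f (restr R m) = restr (fun p => f (R p)) m.
Proof. by rewrite /restr /mkseq -map_comp. Qed.

Lemma restr_inj R S : (forall m, restr R m = restr S m) -> R = S.
Proof.
move=> E; apply: functional_extensionality => p.
by rewrite -(nth_restr (R p) R (ltnSn p)) E nth_restr.
Qed.

Lemma restr_prefix R S m k :
  k <= m -> restr R m = restr S m -> restr R k = restr S k.
Proof. by move=> km /(congr1 (take k)); rewrite !take_restr (minn_idPl km). Qed.

End Restr.

Definition take_closed (M : Type) (T : seq M -> Prop) : Prop :=
  forall t k, T t -> T (take k t).

Definition branches (M : Type) (S : (nat -> M) -> Prop) (t : seq M) : Prop :=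
  exists2 R, S R & t = restr R (size t).

Definition finite_runs (M : Type) (T : seq M -> Prop) : Prop :=
  exists l : list (nat -> M), forall R, Run T R -> List.In R l.

Section Trees.
Variable M : Type.
Implicit Types (T : seq M -> Prop) (S : (nat -> M) -> Prop) (R : nat -> M).

Lemma branches_tree S : game_tree (branches S).
Proof.
split=> [t k [R SR Et]|t [R SR Et]].
  by exists R => //; rewrite Et take_restr size_restr.
by exists (R (size t)); exists R => //; rewrite size_rcons restrS -Et.
Qed.

Lemma game_tree_union T1 T2 :
  game_tree T1 -> game_tree T2 -> game_tree (fun t => T1 t \/ T2 t).
Proof.
move=> [tk1 ex1] [tk2 ex2]; split=> [t k [/tk1|/tk2]|t [/ex1|/ex2]].
- by left.
- by right.
- by case=> x; exists x; left.
- by case=> x; exists x; right.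
Qed.

Lemma game_tree_image (N : Type) (e : M -> N) T :
  game_tree T -> game_tree (fun u => exists2 s, T s & u = map e s).
Proof.
move=> [tk ex]; split=> [u k [s Ts ->]|u [s /ex [x Tx] ->]].
  by exists (take k s); [exact: tk|rewrite map_take].
by exists (e x); exists (rcons s x); rewrite ?map_rcons.
Qed.

Lemma In_of_eventually_branch R (L : list (nat -> M)) p0 :
  (forall p, p0 <= p -> exists2 R1, List.In R1 L & restr R p = restr R1 p) ->
  List.In R L.
Proof.
elim: L p0 => [|R1 L IH] p0 ev; first by have [? []] := ev p0 (leqnn p0).
case: (classic (R1 = R)) => [->|neq]; [by left|right].
have [p1 Np1] : exists p1, restr R p1 <> restr R1 p1.
  apply: NNPP => /not_ex_all_not same; apply: neq; apply/esym/restr_inj => p.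
  exact: NNPP (same p).
apply: (IH (maxn p0 p1)) => p; rewrite geq_max => /andP [le0 le1].
have [R2 [<-|inL] E] := ev p le0; last by exists R2.
by case: Np1; apply: restr_prefix E.
Qed.

Lemma finite_runs_union T S (L : list (nat -> M)) :
  take_closed T -> finite_runs T -> (forall R, S R -> List.In R L) ->
  finite_runs (fun t => T t \/ branches S t).
Proof.
move=> tk [l Hl] SL; exists (l ++ L) => R RR; apply/List.in_or_app.
case: (classic (Run T R)) => [/Hl|NR]; [by left|right].
have [p0 Np0] := not_all_ex_not _ _ NR.
apply: (In_of_eventually_branch (p0 := p0)) => p le.
case: (RR p) => [Tp|[R1 SR1 E]].
  by case: Np0; rewrite -(minn_idPl le) -take_restr; apply: tk.
by exists R1; [exact: SL|rewrite E size_restr].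
Qed.

Lemma finite_runs_image (N : Type) (e : M -> N) (d : N -> M) T :
  cancel e d -> finite_runs T -> finite_runs (fun u => exists2 s, T s & u = map e s).
Proof.
move=> ed [l Hl]; exists (List.map (fun R p => e (R p)) l) => R' RR.
have back p : T (restr (fun q => d (R' q)) p) /\
               restr R' p = restr (fun q => e (d (R' q))) p.
  have [s Ts E] := RR p.
  have Es : restr (fun q => d (R' q)) p = s by rewrite -map_restr E mapK.
  by rewrite Es -[RHS](map_restr e) Es E.
have -> : R' = (fun q => e (d (R' q))) by apply: restr_inj => p; case: (back p).
by apply: (List.in_map (fun R p => e (R p))); apply: Hl => p; case: (back p).
Qed.

End Trees.

Section Embeddings.
Variables (M1 M2 M3 : Type).

Lemma induced_exists (T1 : seq M1 -> Prop) (T2 : seq M2 -> Prop) f R :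
  chronological T1 T2 f -> Run T1 R -> exists R', induced f R R'.
Proof.
move=> ch RR.
case E1: (f (restr R 1)) (ch _ (RR 1)) => [|x0 s] [_ sz1 _].
  by rewrite size_restr in sz1.
exists (fun p => nth x0 (f (restr R p.+1)) p) => n; have [_ szn tk] := ch _ (RR n).
apply: (eq_from_nth (x0 := x0)); first by rewrite szn !size_restr.
move=> i; rewrite size_restr => lt; rewrite nth_restr //.
by rewrite -(minn_idPl lt) -take_restr tk nth_take.
Qed.

Lemma game_embedding_comp (A : game M1) (B : game M2) (C : game M3) f g :
  game_embedding A B f -> game_embedding B C g ->
  game_embedding A C (fun t => g (f t)).
Proof.
move=> [chf injf winf] [chg injg wing]; split.
- move=> t At; have [Bt szf tkf] := chf t At; have [Ct szg tkg] := chg _ Bt.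
  by split=> // [|k]; rewrite ?szg // tkf tkg.
- move=> s t As At E; have [Bs _ _] := chf s As; have [Bt _ _] := chf t At.
  exact: injf (injg _ _ Bs Bt E).
- move=> R R'' RR I; have [R' If] := induced_exists chf RR.
  have RR' : Run (gtree B) R' by move=> n; rewrite If; case: (chf _ (RR n)).
  by rewrite (wing R' R'') ?(winf R R') // => n; rewrite I If.
Qed.

Lemma game_embedding_ext (A B : game M1) (C : game M2) f :
  (forall t, gtree A t <-> gtree B t) -> (forall R, gwin A R <-> gwin B R) ->
  game_embedding A C f -> game_embedding B C f.
Proof.
move=> Et Ew [ch inj win]; split.
- by move=> t /Et /ch.
- by move=> s t /Et Bs /Et Bt; apply: inj.
- by move=> R R' RR I; rewrite -Ew; apply: win => // n; apply/Et.
Qed.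

End Embeddings.

Definition subgame (M : Type) (W : (nat -> M) -> Prop) (T : seq M -> Prop) : game M :=
  Game T (fun R => W R /\ Run T R).

Lemma subgame_is_game (M : Type) (W : (nat -> M) -> Prop) T :
  game_tree T -> is_game (subgame W T).
Proof. by move=> treeT; split=> // R []. Qed.

Lemma section_embedding (M N : Type) (p : N -> M) (W : (nat -> M) -> Prop)
    (T : seq M -> Prop) (TN : seq N -> Prop) (f : seq M -> seq N) :
  chronological T TN f -> (forall t, T t -> map p (f t) = t) ->
  game_embedding (subgame W T) (subgame (fun R => W (fun q => p (R q))) TN) f.
Proof.
move=> ch sec; split=> //.
  by move=> s t Ts Tt E; rewrite -(sec s Ts) -(sec t Tt) E.
move=> R R' RR I /=.
have -> : (fun q => p (R' q)) = R.
  by apply: restr_inj => m; rewrite -map_restr I sec //; apply: RR.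
have RR' : Run TN R' by move=> m; rewrite I; case: (ch _ (RR m)).
by tauto.
Qed.

Lemma countable_enum_choice (X Y : Type) (S : X -> Prop) (P : X -> Y -> Prop) :
  countable_set S -> (forall x, S x -> exists y, P x y) ->
  exists e : nat -> option Y, forall x, S x -> exists k y, e k = Some y /\ P x y.
Proof.
move=> [g ginj] exP.
pose spec k (o : option Y) := forall x, S x -> g x = k -> exists y, o = Some y /\ P x y.
have ex k : exists o, spec k o.
  case: (classic (exists2 x, S x & g x = k)) => [[x Sx gx]|none].
    have [y Pxy] := exP x Sx; exists (Some y) => x' Sx' gx'.
    by exists y; rewrite (ginj x' x) // gx gx'.
  by exists None => x Sx gx; case: none; exists x.
have [e eP] := choice spec ex; exists e => x Sx.
by have [y [ey Pxy]] := eP (g x) x Sx erefl; exists (g x), y.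
Qed.

Lemma countable_enum (X : Type) (S : X -> Prop) :
  countable_set S -> exists e : nat -> option X, forall x, S x -> exists k, e k = Some x.
Proof.
move=> cS; have [e e_all] := countable_enum_choice (P := fun x y => y = x) cS
  (fun x _ => ex_intro _ x erefl).
by exists e => x /e_all [k [y [ek Ey]]]; exists k; rewrite ek Ey.
Qed.

Lemma nodes_enumeration (M : Type) (T : seq M -> Prop) :
  game_tree T -> countable_set T ->
  exists e : nat -> option (nat -> M),
    forall t, T t -> branches (fun R => exists k, e k = Some R) t.
Proof.
move=> [_ ext] cT.
have through t : T t -> exists R : nat -> M, t = restr R (size t).
  by move=> /ext [x0 _]; exists (fun p => nth x0 t p); rewrite /restr mkseq_nth.
have [e e_all] := countable_enum_choice cT through.
by exists e => t /e_all [k [R [ek Et]]]; exists R => //; exists k.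
Qed.

Definition tag0 (M : Type) (x : M) : M * nat := (x, 0).

Section Main.
Variables (M1 M2 : Type) (G1 : game M1) (G2 : game M2) (G : game M1).
Variable rho : nat -> option (nat -> M1).
Variable sigma : nat -> option (nat -> M2).
Hypothesis isG : is_game G.
Hypothesis finG : finite_game G.

Definition approx n (t : seq M1) : Prop :=
  gtree G t \/ branches (fun R => exists2 i, i < n & rho i = Some R) t.

Definition approx_game n : game M1 := subgame (gwin G1) (approx n).

Lemma approx_tree n : game_tree (approx n).
Proof. exact: game_tree_union isG.1 (branches_tree _). Qed.

Lemma approx_take n t k : approx n t -> approx n (take k t).
Proof. exact: (approx_tree n).1. Qed.

Lemma approx_mono n m t : n <= m -> approx n t -> approx m t.
Proof.
move=> nm [Gt|[R [i lt ri] E]]; [by left|right].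
by exists R => //; exists i => //; apply: leq_trans nm.
Qed.

Lemma approx_succ n t :
  approx n.+1 t <-> approx n t \/ branches (fun R => rho n = Some R) t.
Proof.
split=> [[Gt|[R [i]]]|[[Gt|[R [i lt ri] E]]|[R rn E]]].
- by left; left.
- rewrite ltnS leq_eqVlt => /predU1P [-> rn E|lt ri E]; first by right; exists R.
  by left; right; exists R => //; exists i.
- by left.
- by right; exists R => //; exists i => //; apply: ltnW.
- by right; exists R => //; exists n.
Qed.

Lemma approx_game_is_game n : is_game (approx_game n).
Proof. exact: subgame_is_game (approx_tree n). Qed.

Lemma approx_game_finite n : finite_game (approx_game n).
Proof.
apply: (finite_runs_union (L := pmap rho (iota 0 n))) => //; first exact: isG.1.1.
by move=> R [i lt ri]; apply: (In_pmap _ ri); apply/List.in_seq; lia.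
Qed.

Lemma approx_first_exit n R :
  ~ Run (approx n) R -> exists c, forall k, approx n (restr R k) <-> k < c.
Proof.
move=> NR; have [c [Nc below]] := ex_least (not_all_ex_not _ _ NR).
exists c => k; split=> [Hk|kc]; last by apply: NNPP; exact: below.
rewrite ltnNge; apply/negP => ck; apply: Nc.
by rewrite -(minn_idPl ck) -take_restr; apply: approx_take.
Qed.

Section NewBranch.
Variables (n : nat) (R0 : nat -> M1) (c K : nat).
Hypothesis rhon : rho n = Some R0.
Hypothesis hc : forall k, approx n (restr R0 k) <-> k < c.

(* The i-th copy of R0 is tagged [i.+1] exactly at the last positions of the nodes
   [restr R0 k], k >= c, i.e. of the nodes outside approx n. *)
Definition copy (i p : nat) : M1 * nat := (R0 p, if p.+1 < c then 0 else i.+1).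

Definition copies_tree (u : seq (M1 * nat)) : Prop :=
  (exists2 s, approx n s & u = map (@tag0 M1) s) \/
  branches (fun R => exists2 i, i < K & R = copy i) u.

Definition copies_game : game (M1 * nat) :=
  subgame (fun R => gwin G1 (fun q => (R q).1)) copies_tree.

Lemma copies_game_is_game : is_game copies_game.
Proof.
apply: subgame_is_game.
exact: game_tree_union (game_tree_image _ (approx_tree n)) (branches_tree _).
Qed.

Lemma copies_game_finite : finite_game copies_game.
Proof.
apply: (finite_runs_union (L := List.map copy (iota 0 K))).
- exact: (game_tree_image _ (approx_tree n)).1.
- exact: (finite_runs_image (d := fst)) (approx_game_finite n).
- by move=> R [i lt ->]; apply: List.in_map; apply/List.in_seq; lia.
Qed.

Lemma tag_embedding : game_embedding (approx_game n) copies_game (map (@tag0 M1)).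
Proof.
apply: (section_embedding (p := fst)) => [t Ht|t _]; last exact: (mapK (g := fst)).
by split=> [|//|k]; [left; exists t|rewrite size_map|rewrite map_take].
Qed.

Lemma copy_low i m : m < c -> restr (copy i) m = map (@tag0 M1) (restr R0 m).
Proof.
move=> mc; rewrite map_restr /restr /mkseq; apply/eq_in_map => p.
by rewrite mem_iota => /andP [_ pm]; rewrite /copy /tag0 ifT //; lia.
Qed.

Definition graft (i : nat) (t : seq M1) : seq (M1 * nat) :=
  if excluded_middle_informative (t = restr R0 (size t))
  then restr (copy i) (size t) else map (@tag0 M1) t.

Lemma graft_R0 i m : graft i (restr R0 m) = restr (copy i) m.
Proof. by rewrite /graft size_restr; case: excluded_middle_informative. Qed.

Lemma graft_approx i t : approx n t -> graft i t = map (@tag0 M1) t.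
Proof.
rewrite /graft; case: excluded_middle_informative => //= E Ht.
have lt : size t < c by apply/hc; rewrite -E.
by rewrite copy_low // -E.
Qed.

Lemma graft_embedding i :
  i < K -> game_embedding (approx_game n.+1) copies_game (graft i).
Proof.
move=> iK; apply: (section_embedding (p := fst)) => [t|t _]; last first.
  rewrite /graft; case: excluded_middle_informative => [E|_] /=.
    by rewrite map_restr -E.
  exact: (mapK (g := fst)).
case: (classic (t = restr R0 (size t))) => [E _|NE].
  move: (size t) E => m ->; rewrite graft_R0; split=> [|//|k].
  - by right; exists (copy i); [exists i|rewrite size_restr].
  - by rewrite !size_restr.
  - by rewrite !take_restr graft_R0.
case/approx_succ => [Ht|[R]]; last by rewrite rhon => -[<-].
rewrite graft_approx //; split=> [|//|k]; first by left; exists t.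
- exact: size_map.
- by rewrite graft_approx ?map_take //; apply: approx_take.
Qed.

(* [c] is 0 when approx n is empty; the copies still differ at level 1. *)
Lemma copies_separated (X : game M2) h i j :
  game_embedding copies_game X h -> i < K -> j < K ->
  h (restr (copy i) (maxn c 1)) = h (restr (copy j) (maxn c 1)) -> i = j.
Proof.
move=> [_ inj _] iK jK.
have onD l : l < K -> copies_tree (restr (copy l) (maxn c 1)).
  by move=> lK; right; exists (copy l); [exists l|rewrite size_restr].
move=> /(inj _ _ (onD i iK) (onD j jK)).
move=> /(congr1 (fun u => (nth (R0 0, 0) u (maxn c 1).-1).2)).
rewrite !nth_restr /copy /=; try lia.
have -> : ((maxn c 1).-1.+1 < c) = false by lia.
by case.
Qed.

End NewBranch.

Definition good_extension n (F F' : seq M1 -> seq M2) : Prop :=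
  [/\ game_embedding (approx_game n.+1) G2 F',
      (forall t, approx n t -> F' t = F t) &
      forall R m j Sr, rho n = Some R -> 0 < m -> ~ approx n (restr R m) ->
        j <= n -> sigma j = Some Sr -> F' (restr R m) <> restr Sr m].

Hypothesis inj2 : injective_finite G2.

Lemma extend_new_branch n R0 F :
  rho n = Some R0 -> ~ Run (approx n) R0 -> game_embedding (approx_game n) G2 F ->
  exists F', good_extension n F F'.
Proof.
move=> rhon NR EF; have [c hc] := approx_first_exit NR.
pose c' := maxn c 1.
pose A := List.map (fun Sr => restr Sr c') (pmap sigma (iota 0 n.+1)).
pose K := (size A).+1.
have [h [Eh agree]] := inj2 (approx_game_is_game n) (copies_game_is_game n R0 c K)
  (approx_game_finite n) (copies_game_finite n R0 c K) (tag_embedding n R0 c K) EF.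
have [i [iK Ni]] := pigeonhole_avoid (F := fun i => h (restr (copy R0 c i) c'))
  (ltnSn (size A)) (fun i j => copies_separated Eh).
have EF' := game_embedding_comp (graft_embedding rhon hc iK) Eh.
exists (fun t => h (graft R0 c i t)); split=> // [t Ht|R m j Sr].
  by rewrite (graft_approx hc) // agree.
rewrite rhon => -[<-] {R} m0 Nm jn sj E; apply: Ni.
have cm : c <= m by rewrite leqNgt; apply/negP => /hc.
have c'm : c' <= m by rewrite geq_max cm m0.
have onH : approx n.+1 (restr R0 m).
  by apply/approx_succ; right; exists R0; rewrite ?size_restr.
case: EF' => ch _ _; have [_ _ tk] := ch _ onH.
have := tk c'; rewrite E !take_restr (minn_idPl c'm) graft_R0 /= => ->.
apply: List.in_map; apply: (In_pmap _ sj); apply/(List.in_seq n.+1 0 j); lia.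
Qed.

Lemma extend_step n F :
  game_embedding (approx_game n) G2 F -> exists F', good_extension n F F'.
Proof.
move=> EF.
case: (classic (exists2 R0, rho n = Some R0 & ~ Run (approx n) R0)) => [[R0 rn NR]|old].
  exact: extend_new_branch rn NR EF.
have oldR R : rho n = Some R -> Run (approx n) R.
  by move=> rn; apply: NNPP => NR; apply: old; exists R.
have Hsame t : approx n.+1 t <-> approx n t.
  by rewrite approx_succ; split=> [[//|[R /oldR RR ->]]|]; [exact: RR|left].
exists F; split=> // [|R m j Sr /oldR RR _ []//].
apply: (game_embedding_ext _ _ EF) => [t|R] /=; first by split=> /Hsame.
by split=> -[WR RR]; split=> // m; apply/Hsame.
Qed.

Lemma extension_sequence f :
  game_embedding (approx_game 0) G2 f ->
  exists F : nat -> seq M1 -> seq M2, F 0 = f /\ forall n, good_extension n (F n) (F n.+1).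
Proof.
move=> E0; pose next n F := epsilon (inhabits F) (good_extension n F).
have nextP n F : game_embedding (approx_game n) G2 F -> good_extension n F (next n F).
  by move=> /extend_step; apply: epsilon_spec.
have emb n : game_embedding (approx_game n) G2 (iteri n next f).
  by elim: n => //= n IH; case: (nextP _ _ IH).
by exists (fun n => iteri n next f); split=> // n; apply: nextP.
Qed.

Section Extension.
Hypothesis le : game_le G G1.
Hypothesis rho_nodes :
  forall t, gtree G1 t -> branches (fun R => exists k, rho k = Some R) t.
Hypothesis rho_wins : forall R, gwin G1 R -> exists k, rho k = Some R.
Hypothesis sigma_wins : forall Sr, gwin G2 Sr -> exists j, sigma j = Some Sr.

Lemma approx_exhaust t : gtree G1 t -> exists n, approx n t.
Proof. by move=> /rho_nodes [R [k rk] E]; exists k.+1; right; exists R => //; exists k. Qed.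

Section Limit.
Variable F : nat -> seq M1 -> seq M2.
Hypothesis F0 : game_embedding (approx_game 0) G2 (F 0).
Hypothesis F_step : forall n, good_extension n (F n) (F n.+1).

Lemma F_embedding n : game_embedding (approx_game n) G2 (F n).
Proof. by case: n => // n; case: (F_step n). Qed.

Lemma F_stable n m t : n <= m -> approx n t -> F m t = F n t.
Proof.
elim: m => [|m IH]; first by rewrite leqn0 => /eqP ->.
rewrite leq_eqVlt => /predU1P [-> //|nm Ht].
by have [_ agree _] := F_step m; rewrite agree ?IH //; apply: approx_mono Ht.
Qed.

Definition limit (t : seq M1) : seq M2 :=
  F (epsilon (inhabits 0) (fun n => approx n t)) t.

Lemma limitE n t : approx n t -> limit t = F n t.
Proof.
move=> Ht; have He : approx (epsilon (inhabits 0) (fun k => approx k t)) t.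
  by apply: (epsilon_spec (inhabits 0) (fun k => approx k t)); exists n.
rewrite /limit; move: (epsilon _ _) He => e He.
by rewrite -(F_stable (leq_maxr n e) He) (F_stable (leq_maxl n e) Ht).
Qed.

Lemma limit_not_win R R' :
  Run (gtree G1) R -> (forall n, ~ Run (approx n) R) -> induced limit R R' ->
  ~ gwin G2 R'.
Proof.
move=> RR notH I /sigma_wins [j sj].
have [N0 H0] := approx_exhaust (RR 0).
pose N := maxn N0 j.
have [m Nm] := not_all_ex_not _ _ (notH N).
have m0 : 0 < m.
  by case: m Nm => // Nm; case: Nm; apply: approx_mono H0; exact: leq_maxl.
have [[|n] [Hs below]] := ex_least (approx_exhaust (RR m)).
  by case: Nm; apply: approx_mono Hs.
have Nn : ~ approx n (restr R m) by apply: below.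
have nN : N <= n by rewrite leqNgt; apply/negP => nN; apply: Nm; apply: approx_mono Hs.
move: (Hs) => /approx_succ [//|[R0 rn E]]; rewrite size_restr in E.
have NnR0 : ~ approx n (restr R0 m) by rewrite -E.
have jn : j <= n by apply: leq_trans nN; exact: leq_maxr.
have [_ _ sep] := F_step n; apply: (sep R0 m j R' rn m0 NnR0 jn sj).
by rewrite -E I (limitE Hs).
Qed.

Lemma limit_embedding : game_embedding G1 G2 limit.
Proof.
split.
- move=> t /approx_exhaust [n Ht]; have [ch _ _] := F_embedding n.
  have [G2t sz tk] := ch t Ht.
  by rewrite (limitE Ht); split=> // k; rewrite (limitE (approx_take k Ht)).
- move=> s t /approx_exhaust [n1 Hs] /approx_exhaust [n2 Ht].
  have Hs' := approx_mono (leq_maxl n1 n2) Hs.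
  have Ht' := approx_mono (leq_maxr n1 n2) Ht.
  have [_ inj _] := F_embedding (maxn n1 n2).
  by rewrite (limitE Hs') (limitE Ht'); apply: inj.
- move=> R R' RR I; case: (classic (exists n, Run (approx n) R)) => [[n RnR]|none].
    have [_ _ win] := F_embedding n.
    rewrite (win R R' RnR) => [|p]; last by rewrite I (limitE (RnR p)).
    by split=> [[]|].
  have notH n : ~ Run (approx n) R by move=> RnR; apply: none; exists n.
  split=> [/(limit_not_win RR notH I) //|/rho_wins [k rk]].
  by case: (notH k.+1) => p; right; exists R; [exists k|rewrite size_restr].
Qed.

End Limit.

Lemma extend_embedding f :
  game_embedding G G2 f ->
  exists ft, game_embedding G1 G2 ft /\ (forall t, gtree G t -> ft t = f t).
Proof.
move=> Ef; have H0 t : approx 0 t <-> gtree G t by split=> [[//|[R [i]]]|]; [|left].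
have E0 : game_embedding (approx_game 0) G2 f.
  apply: (game_embedding_ext _ _ Ef) => [t|R] /=; first by split=> /H0.
  by rewrite le.2; split=> -[WR RR]; split=> // m; apply/H0.
have [F [F0f F_step]] := extension_sequence E0.
exists (limit F); split; first by apply: limit_embedding F_step; rewrite F0f.
by move=> t /H0 Ht; rewrite (limitE F_step Ht) F0f.
Qed.

End Extension.
End Main.

Theorem mainTheorem4 (M1 M2 : Type) (G1 : game M1) (G2 : game M2) :
  is_game G1 -> is_game G2 ->
  countable_set (gtree G1) -> countable_set (gtree G2) ->
  countable_set (gwin G1) -> countable_set (gwin G2) ->
  injective_finite G2 ->
  forall (G : game M1) (f : seq M1 -> seq M2),
    is_game G -> game_le G G1 -> finite_game G -> game_embedding G G2 f ->
    exists ft : seq M1 -> seq M2,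
      game_embedding G1 G2 ft /\ (forall t, gtree G t -> ft t = f t).
Proof.
move=> isG1 _ cT1 _ cW1 cW2 inj2 G f isG le finG Ef.
have [eN eN_all] := nodes_enumeration isG1.1 cT1.
have [eW eW_all] := countable_enum cW1.
have [sigma sigma_all] := countable_enum cW2.
pose rho k := if odd k then eW k./2 else eN k./2.
apply: (extend_embedding (rho := rho) isG finG inj2 le _ _ sigma_all Ef).
- move=> t /eN_all [R [k ek] Et]; exists R => //; exists k.*2.
  by rewrite /rho odd_double half_double.
- move=> R /eW_all [k ek]; exists k.*2.+1.
  by rewrite /rho /= odd_double /= uphalf_double.
Qed.
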